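(* Let $w$ be a word of length $k$ over an alphabet with $q \ge 2$ letters. Then $H_w(n) \ge (q-1)\, h_w(n-k-1)$ for all $n > k+1$.
   Context: Let $\Omega$ be a finite alphabet with $q\ge2$ letters; $w = w_k\dots w_1$ a word of length $k$. For an integer $n$, $h_w(n)$ is the number of strings of length $n$ over $\Omega$ whose last $k$ characters form $w$ and which contain $w$ as a block of $k$ consecutive characters nowhere else ($h_w(n) = 0$ for $n < k$, $h_w(k)=1$). $H_w(n) = q\,h_w(n-1) - h_w(n)$; for $n > k$ this equals the number of strings of length $n$ that begin with $w$, end with $w$, and contain $w$ as a block of $k$ consecutive characters nowhere else (and $H_w(k) = -1$, $H_w(n)=0$ for $n<k$). *)

From mathcomp Require Import all_boot all_order all_algebra.
Set Implicit Arguments. Unset Strict Implicit. Unset Printing Implicit Defensive.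
Import GRing.Theory Num.Theory.

(* Positions are 0-based; the block of length size w starting
   at position i of s is take (size w) (drop i s). *)
Definition occurs_at (Omega : eqType) (s w : seq Omega) (i : nat) : bool :=
  (i + size w <= size s) && (take (size w) (drop i s) == w).

(* h_w(n): number of strings of length n whose last k = size w characters
   form w, and which contain w as a block nowhere else. *)
Definition hw (Omega : finType) (w : seq Omega) (n : nat) : nat :=
  #|[set s : n.-tuple Omega |
      (size w <= n) &&
      [forall i : 'I_n.+1, occurs_at s w i == (val i == n - size w)]]|.

Definition Hw (Omega : finType) (w : seq Omega) (n : nat) : int :=
  (#|Omega|%:Z * (hw w n.-1)%:Z - (hw w n)%:Z)%R.

From mathcomp Require Import all_boot all_order all_algebra.
From mathcomp Require Import zify.

(* Write k = size w, q = #|Omega| and n = k + m + 1.  The strings t of length n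
   whose tail [behead t] is counted by h_w(n-1) number q h_w(n-1); they include
   the strings counted by h_w(n) and, disjointly, those starting with w, so
   H_w(n) is at least the number of the latter.  These include w ++ c :: u for
   every u counted by h_w(m) and every letter c but at most one: a letter c
   creating an occurrence of w that overlaps c gives w two periods, and the
   Fine--Wilf interplay of these periods determines c from u. *)

Definition periodic {T : Type} (f : nat -> T) (p n : nat) :=
  forall x, x + p < n -> f x = f (x + p).

Lemma periodic_le {T : Type} (f : nat -> T) p m n :
  m <= n -> periodic f p n -> periodic f p m.
Proof. by move=> le_mn fp x lt_x; apply: fp; lia. Qed.

Lemma periodic_sub {T : Type} (f : nat -> T) p q n : p <= q ->
  periodic f p n -> periodic f q n -> periodic f (q - p) (n - p).
Proof.
move=> le_pq fp fq x lt_x; rewrite fq; last by lia.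
by rewrite [RHS]fp; [congr f | ]; lia.
Qed.

(* The Euclidean-algorithm core of the Fine--Wilf theorem. *)
Lemma periodic_twin {T : Type} (f : nat -> T) p q : 0 < p -> 0 < q ->
  periodic f p (p + q).-1 -> periodic f q (p + q).-1 -> f p.-1 = f q.-1.
Proof.
have [N] := ubnP (p + q); elim: N p q => // N IH p q lt_N.
wlog le_pq : p q lt_N / p <= q.
  move=> W; case: (leqP p q) => [|/ltnW le_qp]; first exact: W.
  move=> q0 p0 fp fq; symmetry; apply: W => //; rewrite 1?addnC //; lia.
move=> p0 q0 fp fq; case: (ltnP p q) => [lt_pq|le_qp]; last first.
  by have -> : q = p by lia.
rewrite (_ : q.-1 = q.-1 - p + p); last by lia.
rewrite -fp; last by lia.
rewrite (_ : q.-1 - p = (q - p).-1); last by lia.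
apply: IH; [lia | by [] | lia | |].
- by apply: periodic_le fp; lia.
- by rewrite (_ : (p + (q - p)).-1 = (p + q).-1 - p); [exact: periodic_sub | lia].
Qed.

Section Occurrences.
Context {T : eqType}.
Implicit Types (s u w : seq T) (c : T).

Lemma occurs_atP x0 s w i :
  reflect (i + size w <= size s /\
           forall j, j < size w -> nth x0 s (i + j) = nth x0 w j)
          (occurs_at s w i).
Proof.
rewrite /occurs_at; apply: (iffP andP) => [[le_s /eqP occ]|[le_s occ]].
  by split=> // j lt_j; rewrite -occ nth_take // nth_drop.
split=> //; apply/eqP/(eq_from_nth (x0 := x0)).
  by rewrite size_takel // size_drop; lia.
move=> j; rewrite size_takel ?size_drop; last by lia.
by move=> lt_j; rewrite nth_take // nth_drop occ.
Qed.

Lemma occurs_at_behead s w i :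
  0 < size s -> occurs_at (behead s) w i = occurs_at s w i.+1.
Proof. by case: s => // x s _; rewrite /occurs_at /= addSn ltnS. Qed.

Lemma occurs_at_catr s1 s2 w i :
  occurs_at (s1 ++ s2) w (size s1 + i) = occurs_at s2 w i.
Proof.
rewrite /occurs_at size_cat drop_cat ltnNge leq_addr /= addKn.
by rewrite -addnA leq_add2l.
Qed.

Lemma occurs_at_cat0 s w : occurs_at (w ++ s) w 0.
Proof. by rewrite /occurs_at drop0 take_size_cat // size_cat leq_addr eqxx. Qed.

Lemma occurs_at_overlap x0 {w c u i} : 0 < i <= size w ->
  occurs_at (w ++ c :: u) w i ->
  [/\ c = nth x0 w (size w - i), periodic (nth x0 w) i (size w) &
      forall r, r < i.-1 -> nth x0 u r = nth x0 w (size w - i + r).+1].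
Proof.
move=> /andP[i_gt0 le_i] /(occurs_atP x0) [_ occ]; split.
- rewrite -occ; last by lia.
  by rewrite subnKC // nth_cat ltnn subnn.
- by move=> j lt_j; rewrite -occ ?nth_cat 1?addnC ?lt_j //; lia.
- move=> r lt_r; rewrite -occ; last by lia.
  rewrite nth_cat ifF; last by lia.
  by rewrite (_ : _ - size w = r.+1) //; lia.
Qed.

(* Two overlapping occurrences give the window of [w] after position
   [size w - i2] the periods [i2 - i1] and [i1]. *)
Lemma occurs_at_overlap_letter {w c1 c2 u i1 i2} :
  0 < i1 <= size w -> 0 < i2 <= size w ->
  occurs_at (w ++ c1 :: u) w i1 -> occurs_at (w ++ c2 :: u) w i2 -> c1 = c2.
Proof.
wlog le_i12 : c1 c2 i1 i2 / i1 <= i2.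
  move=> W; case: (leqP i1 i2) => [|/ltnW]; first exact: W.
  by move=> le_i21 *; symmetry; apply: (W c2 c1 i2 i1).
move=> i1_w i2_w occ1 occ2.
have [c1E per1 u1] := occurs_at_overlap c1 i1_w occ1.
have [c2E _ u2] := occurs_at_overlap c1 i2_w occ2.
rewrite {}c1E {}c2E; set k := size w in per1 u1 u2 *.
case: (ltnP i1 i2) => [lt_i12|le_i21]; last by have -> : i2 = i1 by lia.
pose f x := nth c1 w (k - i2 + x).+1.
have f_d : periodic f (i2 - i1) (i2 - i1 + i1).-1.
  move=> x lt_x; rewrite /f -u2; last by lia.
  by rewrite u1; [congr nth; lia | lia].
have f_i1 : periodic f i1 (i2 - i1 + i1).-1.
  by move=> x lt_x; rewrite /f per1; [congr nth; lia | lia].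
have : f (i2 - i1).-1 = f i1.-1 by apply: (periodic_twin f _ _ _ _ f_d f_i1); lia.
rewrite /f (_ : (k - i2 + (i2 - i1).-1).+1 = k - i1); last by lia.
by move=> ->; rewrite [RHS]per1; [congr nth | ]; lia.
Qed.

End Occurrences.

Section OnlyAtEnd.
Context {T : eqType}.
Implicit Types (s t u w : seq T) (c : T).

(* [hw w n] is, by conversion, the number of [n]-tuples [s] with
   [only_at_end w s n]. *)
Definition only_at_end w s n : bool :=
  (size w <= n) && [forall i : 'I_n.+1, occurs_at s w i == (val i == n - size w)].

Lemma only_at_endP w {s n} : size s = n ->
  reflect [/\ size w <= n, occurs_at s w (n - size w) &
              forall i, occurs_at s w i -> i = n - size w]
          (only_at_end w s n).
Proof.
move=> size_s; apply: (iffP andP) => [[le_wn /forallP occ]|[le_wn occ_end occ]].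
  split=> // [|i occ_i].
    have lt_end : n - size w < n.+1 by rewrite ltnS leq_subr.
    by have /eqP := occ (Ordinal lt_end); rewrite eqxx.
  have lt_i : i < n.+1 by move: occ_i; rewrite /occurs_at size_s => /andP[]; lia.
  by have /eqP := occ (Ordinal lt_i); rewrite occ_i => /esym/eqP.
split=> //; apply/forallP => -[i lt_i] /=.
case occ_i: (occurs_at s w i); first by rewrite (occ _ occ_i) eqxx.
by case: (i =P n - size w) occ_i => // ->; rewrite occ_end.
Qed.

Lemma only_at_end_behead {w t n} : size t = n.+1 -> size w <= n ->
  only_at_end w t n.+1 -> only_at_end w (behead t) n.
Proof.
move=> size_t le_wn /(only_at_endP _ size_t) [_ occ_end occ].
apply/only_at_endP; first by rewrite size_behead size_t.
split=> // [|i]; rewrite occurs_at_behead ?size_t //.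
  by rewrite subSn in occ_end.
by move/occ; lia.
Qed.

Lemma only_at_end_occurs0 {w s n} : size s = n -> size w < n ->
  only_at_end w s n -> ~~ occurs_at s w 0.
Proof. by move=> size_s lt_wn /(only_at_endP _ size_s) [_ _ occ]; apply/negP => /occ; lia. Qed.

(* The new occurrences of [w] in [behead (w ++ c :: u)] are those covering [c]. *)
Lemma only_at_end_behead_cat w c {u m} : size u = m -> only_at_end w u m ->
  ~~ has (occurs_at (w ++ c :: u) w) (iota 1 (size w)) ->
  only_at_end w (behead (w ++ c :: u)) (size w + m).
Proof.
move=> size_u /(only_at_endP _ size_u) [le_wm occ_end occ] /hasPn no_overlap.
have wcu : w ++ c :: u = rcons w c ++ u by rewrite cat_rcons.
have wcu_gt0 : 0 < size (w ++ c :: u) by rewrite size_cat addnS.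
apply/only_at_endP; first by rewrite size_behead size_cat /= size_u addnS.
split=> [||i]; rewrite ?occurs_at_behead //; first by lia.
  rewrite wcu (_ : _.+1 = size (rcons w c) + (m - size w)) ?occurs_at_catr //.
  by rewrite size_rcons; lia.
case: (ltnP i (size w)) => [lt_iw|le_wi].
  by move=> occ_i; have := no_overlap i.+1; rewrite mem_iota occ_i; lia.
rewrite wcu (_ : i.+1 = size (rcons w c) + (i - size w)); last by rewrite size_rcons; lia.
by rewrite occurs_at_catr => /occ; lia.
Qed.

Lemma only_at_end_behead_cat_letter {w c1 c2 u m} : size u = m -> only_at_end w u m ->
  ~~ only_at_end w (behead (w ++ c1 :: u)) (size w + m) ->
  ~~ only_at_end w (behead (w ++ c2 :: u)) (size w + m) -> c1 = c2.
Proof.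
move=> size_u end_u bad1 bad2.
have /hasP[i1 + occ1] := contraNT (only_at_end_behead_cat w c1 size_u end_u) bad1.
have /hasP[i2 + occ2] := contraNT (only_at_end_behead_cat w c2 size_u end_u) bad2.
rewrite !mem_iota => i1_w i2_w.
by apply: (occurs_at_overlap_letter _ _ occ1 occ2); lia.
Qed.

End OnlyAtEnd.

Section Counting.
Context {Omega : finType} (w : seq Omega).

Let S n := [set s : n.-tuple Omega | only_at_end w s n].
Let Y n := [set t : n.+1.-tuple Omega | only_at_end w (behead t) n].
Let Z n := [set t : n.+1.-tuple Omega | only_at_end w (behead t) n && occurs_at t w 0].

Lemma card_behead_only_at_end n : #|Y n| <= #|Omega| * hw w n.
Proof.
pose cons_tuple (p : Omega * n.-tuple Omega) := [tuple of p.1 :: p.2].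
apply: (@leq_trans #|cons_tuple @: setX [set: Omega] (S n)|).
  apply/subset_leq_card/subsetP => t; rewrite inE => end_t.
  apply/imsetP; exists (thead t, [tuple of behead t]); first by rewrite !inE.
  by apply: val_inj; rewrite /= [in LHS](tuple_eta t).
by rewrite (leq_trans (leq_imset_card _ _)) // cardsX cardsT.
Qed.

Lemma hw_succ_add_card_le {n} : size w <= n ->
  hw w n.+1 + #|Z n| <= #|Omega| * hw w n.
Proof.
move=> le_wn; apply: leq_trans (card_behead_only_at_end n).
have S_Y : S n.+1 \subset Y n.
  apply/subsetP => t; rewrite !inE => end_t.
  exact: only_at_end_behead (size_tuple t) le_wn end_t.
rewrite -(cardsID (S n.+1) (Y n)) (setIidPr S_Y) leq_add2l.
apply/subset_leq_card/subsetP => t; rewrite !inE => /andP[-> occ0] /=.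
have lt_wn : size w < n.+1 by rewrite ltnS.
by rewrite andbT; apply: contraTN occ0; apply: only_at_end_occurs0 (size_tuple t) lt_wn.
Qed.

Lemma card_prefixed_only_at_end m :
  (#|Omega| - 1) * hw w m <= #|Z (size w + m)|.
Proof.
have size_wcu : size w + m.+1 = (size w + m).+1 by rewrite addnS.
pose prefix (p : Omega * m.-tuple Omega) :=
  tcast size_wcu [tuple of in_tuple w ++ [tuple of p.1 :: p.2]].
pose A := setX [set: Omega] (S m).
pose D := [set p : Omega * m.-tuple Omega |
            only_at_end w (behead (w ++ p.1 :: p.2)) (size w + m)].
have card_A : #|A| = #|Omega| * hw w m by rewrite cardsX cardsT.
have card_AD : #|A :\: D| <= hw w m.
  rewrite -(card_in_imset (f := snd)).
    apply/subset_leq_card/subsetP => _ /imsetP[[c u] + ->].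
    by rewrite !inE => /andP[].
  move=> [c1 u1] [c2 u2]; rewrite !inE /= => /andP[bad1 end_u1] /andP[bad2 _].
  move=> eq_u; rewrite -{}eq_u in bad2 *.
  by rewrite (only_at_end_behead_cat_letter (size_tuple u1) end_u1 bad1 bad2).
have card_AID : #|A :&: D| <= #|Z (size w + m)|.
  rewrite -(card_in_imset (f := prefix)).
    apply/subset_leq_card/subsetP => _ /imsetP[p + ->].
    by rewrite !inE val_tcast /= occurs_at_cat0 andbT => /andP[_].
  move=> [c1 u1] [c2 u2] _ _ /(congr1 (@tval _ _)); rewrite !val_tcast /= => /eqP.
  by rewrite eqseq_cat // => /andP[_ /eqP[-> /val_inj ->]].
have := cardsID D A; rewrite card_A mulnBl mul1n; lia.
Qed.

Lemma hw_succ_add_le m :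
  hw w (size w + m).+1 + (#|Omega| - 1) * hw w m <= #|Omega| * hw w (size w + m).
Proof.
apply: leq_trans _ (hw_succ_add_card_le (leq_addr m (size w))).
by rewrite leq_add2l card_prefixed_only_at_end.
Qed.

End Counting.

Theorem corollary4p2 (Omega : finType) (w : seq Omega) (n : nat) :
  (2 <= #|Omega|)%N -> (size w + 1 < n)%N ->
  (((#|Omega| - 1)%:Z * (hw w (n - size w - 1))%:Z <= Hw w n)%R).
Proof.
move=> _ lt_wn; set m := n - size w - 1.
have n_eq : n = (size w + m).+1 by rewrite /m; lia.
have count := hw_succ_add_le w m; rewrite -n_eq in count.
have le_hw : hw w n <= #|Omega| * hw w (size w + m) := leq_trans (leq_addr _ _) count.
by rewrite /Hw n_eq /= -n_eq -!PoszM subzn // lez_nat leq_subRL.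
Qed.
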